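(* Let $\mathcal{G}$ be a MAG on vertex set $V$, let $W\subseteq V$ and let $a,b\in W$. Let $C\subseteq W$ and $E\subseteq V\setminus W$ be such that $a,b\notin C$ and $a$ and $b$ are m-separated by $C\cup E$ in $\mathcal{G}$. Then $a$ and $b$ are m-separated by $C$ in the induced subgraph $\mathcal{G}_W$.
   Context: A MAG is an acyclic directed mixed graph (directed and bidirected edges, no directed cycles) with $\mathrm{sib}(v)\cap\mathrm{an}(v)=\emptyset$ for all $v$ and in which every nonadjacent pair of vertices is m-separated by some set. A path is m-connecting given $C$ if every non-endpoint collider (both adjacent edges on the path have an arrowhead at it) lies in $\mathrm{an}(C)$ and every other non-endpoint vertex lies outside $C$; $a$ and $b$ are m-separated by $C$ if there is no m-connecting path between them given $C$. $\mathcal{G}_W$ is the induced subgraph on $W$ (ancestors computed in $\mathcal{G}_W$). *)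

From mathcomp Require Import all_boot.
Set Implicit Arguments. Unset Strict Implicit. Unset Printing Implicit Defensive.

Section MixedGraphs.
Variable V : finType.

(* A directed mixed graph: [d x y] means x -> y ; [bi x y] means x <-> y. *)

Definition adj (d bi : rel V) : rel V :=
  fun x y => [|| d x y, d y x, bi x y | bi y x].

(* ancestors: x \in an(y) iff there is a directed path x -> ... -> y
   (reflexive, as usual) *)
Definition anc (d : rel V) (x y : V) : bool := connect d x y.

Definition in_anset (d : rel V) (v : V) (C : {set V}) : bool :=
  [exists c in C, anc d v c].

Definition arrow_at (d bi : rel V) (x y : V) : bool := d x y || bi x y || bi y x.

Definition is_path (d bi : rel V) (a b : V) (p : seq V) : bool :=
  [&& path (adj d bi) a p, uniq (a :: p) & last a p == b].

Definition m_connecting (d bi : rel V) (C : {set V}) (a : V) (p : seq V) : Prop :=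
  forall i, 0 < i < size p ->
    let s := a :: p in
    let u := nth a s i.-1 in
    let v := nth a s i in
    let w := nth a s i.+1 in
    if arrow_at d bi u v && arrow_at d bi w v
    then in_anset d v C
    else v \notin C.

Definition m_separated (d bi : rel V) (a b : V) (C : {set V}) : Prop :=
  ~ (exists p : seq V, is_path d bi a b p /\ m_connecting d bi C a p).

Definition is_MAG (d bi : rel V) : Prop :=
  [/\
      (forall x y, bi x y = bi y x),
      (forall x, ~~ bi x x),
      (* no directed cycles (includes no self loops) *)
      (forall x y, d x y -> ~~ anc d y x),
      (forall x v, bi x v -> ~~ anc d x v) &
      (forall x y, x != y -> ~~ adj d bi x y ->
         exists C : {set V}, m_separated d bi x y C)].

(* Induced subgraph on W, represented on the same vertex type: only edges
   with both endpoints in W are kept (so paths, ancestors etc. of G_W are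
   computed within W). *)
Definition ind_d (W : {set V}) (d : rel V) : rel V :=
  fun x y => [&& x \in W, y \in W & d x y].
Definition ind_bi (W : {set V}) (bi : rel V) : rel V :=
  fun x y => [&& x \in W, y \in W & bi x y].

End MixedGraphs.

From mathcomp Require Import all_boot.

Set Implicit Arguments.
Unset Strict Implicit.
Unset Printing Implicit Defensive.

(* An m-connecting path of G_W given C is literally a path of G whose vertices
   all lie in W.  Its colliders are ancestors of C within G_W, hence in G; its
   other inner vertices avoid C and, lying in W, also avoid E.  So it is
   m-connecting given C :|: E in G. *)

Section InducedSubgraph.
Variables (V : finType) (d bi : rel V) (W : {set V}).

Lemma adj_ind x y :
  adj (ind_d W d) (ind_bi W bi) x y -> [&& x \in W, y \in W & adj d bi x y].
Proof. by rewrite /adj /ind_d /ind_bi; case: (x \in W); case: (y \in W). Qed.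

Lemma path_ind a p :
  a \in W -> path (adj (ind_d W d) (ind_bi W bi)) a p ->
  all [in W] (a :: p) && path (adj d bi) a p.
Proof.
elim: p a => [|x p IHp] a aW /=; first by rewrite aW.
case/andP=> /adj_ind/and3P[_ xW adj_ax] /(IHp x xW)/andP[/= /andP[_ pW] path_xp].
by rewrite aW xW adj_ax pW path_xp.
Qed.

Lemma is_path_ind a b p :
  a \in W -> is_path (ind_d W d) (ind_bi W bi) a b p ->
  all [in W] (a :: p) /\ is_path d bi a b p.
Proof.
move=> aW /and3P[/(path_ind aW)/andP[pW path_ap] uniq_p last_p].
by split; last exact/and3P.
Qed.

Lemma arrow_at_ind x y :
  x \in W -> y \in W -> arrow_at (ind_d W d) (ind_bi W bi) x y = arrow_at d bi x y.
Proof. by move=> xW yW; rewrite /arrow_at /ind_d /ind_bi xW yW. Qed.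

Lemma anc_ind x y : anc (ind_d W d) x y -> anc d x y.
Proof. by apply: connect_sub => u v /and3P[_ _ /connect1]. Qed.

Lemma in_anset_ind v (C D : {set V}) :
  C \subset D -> in_anset (ind_d W d) v C -> in_anset d v D.
Proof.
move=> sCD /existsP[c /andP[cC anc_vc]]; apply/existsP; exists c.
by rewrite (subsetP sCD) //= anc_ind.
Qed.

Lemma m_connecting_ind (C E : {set V}) a p :
  all [in W] (a :: p) -> E \subset ~: W ->
  m_connecting (ind_d W d) (ind_bi W bi) C a p -> m_connecting d bi (C :|: E) a p.
Proof.
move=> /allP pW sEW conn i i_inner; move: (conn i i_inner) => /=.
have nthW j : nth a (a :: p) j \in W.
  case: (ltnP j (size (a :: p))) => [j_lt | /(nth_default a) ->]; last exact/pW/mem_head.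
  exact/pW/mem_nth.
(* [/=] displays the successor vertex as [nth a p i]. *)
rewrite !arrow_at_ind ?(nthW i.+1) ?nthW //; case: ifP => _; first exact/in_anset_ind/subsetUl.
move=> notC; rewrite in_setU negb_or notC /=.
by apply: contraTN (nthW i) => /(subsetP sEW); rewrite inE.
Qed.

End InducedSubgraph.

Theorem propositionB2 (V : finType) (d bi : rel V) (W C E : {set V}) (a b : V) :
  is_MAG d bi ->
  a \in W -> b \in W ->
  C \subset W -> E \subset ~: W ->
  a \notin C -> b \notin C ->
  m_separated d bi a b (C :|: E) ->
  m_separated (ind_d W d) (ind_bi W bi) a b C.
Proof.
move=> _ aW _ _ sEW _ _ sep [p [path_p conn_p]]; apply: sep; exists p.
have [pW path_G] := is_path_ind aW path_p.
by split; last exact: m_connecting_ind pW sEW conn_p.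
Qed.
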